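(* For every co-comparability graph $G$, $\operatorname{tw}(G)\le 2\Delta(G)-1$, where $\Delta(G)$ is the maximum degree of $G$.
   Context: A comparability graph is a graph whose vertex set admits a partial order such that two distinct vertices are adjacent iff they are comparable. $G$ is a co-comparability graph if its complement is a comparability graph. The treewidth $\operatorname{tw}(G)$ is the minimum, over all tree decompositions $(\{X_i\},T)$ of $G$ (a tree $T$ with vertex subsets $X_i$ at its nodes covering all vertices and all edges, such that for each vertex the nodes containing it form a connected subtree), of $\max_i|X_i|-1$. *)

From mathcomp Require Import all_boot.
Set Implicit Arguments. Unset Strict Implicit. Unset Printing Implicit Defensive.

Definition simple_graph (T : finType) (e : rel T) : Prop :=
  symmetric e /\ irreflexive e.

Definition partial_order (T : finType) (r : rel T) : Prop :=
  reflexive r /\ antisymmetric r /\ transitive r.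

Definition comparability_graph (T : finType) (e : rel T) : Prop :=
  exists r : rel T, partial_order r /\
    forall x y : T, x != y -> e x y = (r x y || r y x).

Definition complement_rel (T : finType) (e : rel T) : rel T :=
  fun x y => (x != y) && ~~ e x y.

Definition cocomparability_graph (T : finType) (e : rel T) : Prop :=
  comparability_graph (complement_rel e).

Definition degree (T : finType) (e : rel T) (v : T) : nat := #|[set u | e v u]|.
Definition max_degree (T : finType) (e : rel T) : nat := \max_(v : T) degree e v.

Definition has_cycle (I : finType) (t : rel I) : Prop :=
  exists (x : I) (p : seq I),
    [/\ 2 <= size p, uniq (x :: p), path t x p & t (last x p) x].

Definition is_tree (I : finType) (t : rel I) : Prop :=
  [/\ simple_graph t, (forall i j : I, connect t i j) & ~ has_cycle t].

Definition tree_decomposition (T : finType) (e : rel T)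
  (I : finType) (t : rel I) (B : I -> {set T}) : Prop :=
  [/\ is_tree t,
      (forall v : T, exists i : I, v \in B i),
      (forall u v : T, e u v -> exists i : I, (u \in B i) && (v \in B i)) &
      (forall (v : T) (i j : I), v \in B i -> v \in B j ->
          connect [rel a b | [&& t a b, v \in B a & v \in B b]] i j)].

(* tw(G) <= k  (for k : nat): some tree decomposition has all bags of size <= k+1.
   This is the literal unfolding of "min over decompositions of (max bag size - 1) <= k". *)
Definition treewidth_le (T : finType) (e : rel T) (k : nat) : Prop :=
  exists (I : finType) (t : rel I) (B : I -> {set T}),
    tree_decomposition e t B /\ forall i : I, #|B i| <= k.+1.

From mathcomp Require Import all_boot zify.
Set Implicit Arguments. Unset Strict Implicit. Unset Printing Implicit Defensive.

(* Order the vertices along a linear extension of the partial order whose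
   comparability graph is the complement of G.  This ordering is umbrella-free:
   if x < z < y and xy is an edge, then z is adjacent to x or to y.  Let bag k
   consist of the k-th vertex and of the earlier vertices with a neighbour at
   position k or later; these bags form a path decomposition.  If x is the
   earliest vertex of bag k with such a neighbour y, every vertex of the bag
   lies between x and y, hence is adjacent to x or to y, so the bag has at most
   deg x + deg y <= 2 Delta vertices. *)

Section PathGraph.
Variable n : nat.

Definition path_graph : rel 'I_n :=
  fun a b => (a.+1 == b :> nat) || (b.+1 == a :> nat).

Lemma path_graph_sym : symmetric path_graph.
Proof. by move=> a b; rewrite /path_graph orbC. Qed.

Lemma path_graph_irr : irreflexive path_graph.
Proof. by move=> a; apply/negP => /orP[] /eqP; lia. Qed.

Lemma path_graph_lower_neighbour_uniq (m a b : 'I_n) :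
  path_graph m a -> path_graph m b -> a <= m -> b <= m -> a = b.
Proof. by move=> /orP[]/eqP ma /orP[]/eqP mb am bm; apply/val_inj => /=; lia. Qed.

Lemma path_graph_acyclic : ~ has_cycle path_graph.
Proof.
(* The largest vertex m of a cycle has two distinct cycle neighbours, but both
   would have to be m - 1. *)
move=> [x [p [size_p uniq_xp path_xp last_x]]].
have cycle_xp : cycle path_graph (x :: p) by rewrite /= rcons_path path_xp last_x.
have [m m_in m_max] := @arg_maxnP _ x (fun i => i \in x :: p) val (mem_head x p).
have [k q rot_m] := rot_to m_in.
have : [/\ cycle path_graph (m :: q), uniq (m :: q) & 2 <= size q].
  have size_mq : size (m :: q) = size (x :: p) by rewrite -rot_m size_rot.
  by rewrite -rot_m rot_cycle rot_uniq; split=> //; move: size_mq size_p => /= [->].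
have q_max z : z \in q -> z <= m.
  move=> z_q; apply: m_max.
  by rewrite -(mem_rot k) rot_m inE z_q orbT.
case: q rot_m q_max => [|a [|a' q]] _ q_max [cycle_mq uniq_mq] // _.
move: cycle_mq uniq_mq => /= /and3P[ma _]; rewrite rcons_path => /andP[_ lm].
case/and3P=> _ a_q _.
have l_q : last a' q \in a' :: q by apply: mem_last.
suff eq_al : a = last a' q by rewrite eq_al l_q in a_q.
apply: (path_graph_lower_neighbour_uniq ma); rewrite 1?path_graph_sym //.
  by apply: q_max; rewrite mem_head.
by apply: q_max; rewrite inE l_q orbT.
Qed.

Lemma connect_path_graph_convex (P : pred 'I_n) :
  (forall i j l : 'I_n, P i -> P j -> i <= l <= j -> P l) ->
  {in P &, forall i j, connect [rel a b | [&& path_graph a b, P a & P b]] i j}.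
Proof.
move=> P_convex.
set t := [rel a b | _].
have t_sym : symmetric t by move=> a b /=; rewrite path_graph_sym (andbC (P a)).
suff connect_up d (i j : 'I_n) : P i -> P j -> j = i + d :> nat -> connect t i j.
  move=> i j Pi Pj; case: (leqP i j) => [ij | /ltnW ji].
    by apply: (connect_up (j - i)) => //; lia.
  by rewrite sym_connect_sym //; apply: (connect_up (i - j)) => //; lia.
elim: d j => [|d IHd] j Pi Pj ji.
  by have -> : j = i by apply/val_inj => /=; rewrite ji addn0.
have lt_id : i + d < n by have := ltn_ord j; lia.
pose j' := Ordinal lt_id.
have Pj' : P j' by apply: (P_convex i j) => //=; lia.
apply: connect_trans (IHd j' Pi Pj' erefl) (connect1 _).
by rewrite /= Pj' Pj /path_graph /= ji addnS eqxx.
Qed.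

Lemma path_graph_tree : is_tree path_graph.
Proof.
split=> [|i j|]; last exact: path_graph_acyclic.
- exact: (conj path_graph_sym path_graph_irr).
- apply: connect_sub (connect_path_graph_convex (P := predT) _ isT isT) => // a b.
  by case/andP=> ab _; apply: connect1.
Qed.

End PathGraph.

Arguments path_graph {n}.

Section LinearExtension.
Variables (T : finType) (r : rel T).
Hypotheses (r_anti : antisymmetric r) (r_trans : transitive r).

Definition strict_lower (x : T) : {set T} := [set y | r y x && (y != x)].

Lemma strict_lower_proper a b : r a b -> a != b -> strict_lower a \proper strict_lower b.
Proof.
move=> rab neq_ab; apply/properP; split; last first.
  by exists a; rewrite !inE ?rab ?neq_ab ?eqxx ?andbF.
apply/subsetP => z; rewrite !inE => /andP[rza neq_za].
rewrite (r_trans rza rab); apply: contra_neq neq_ab => eq_zb.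
by apply: r_anti; rewrite rab -eq_zb rza.
Qed.

(* Rank by the number of strict predecessors, breaking ties with [enum_rank]. *)
Lemma linear_extension_key :
  exists key : T -> nat,
    injective key /\ forall a b, r a b -> a != b -> key a < key b.
Proof.
pose key x := #|strict_lower x| * #|T| + enum_rank x.
have rank_lt x : enum_rank x < #|T| := ltn_ord _.
exists key; split=> [a b eq_key | a b rab neq_ab].
  have : key a %% #|T| = key b %% #|T| by rewrite eq_key.
  by rewrite !modnMDl !modn_small // => /val_inj/enum_rank_inj.
have := proper_card (strict_lower_proper rab neq_ab).
have := rank_lt a; rewrite /key; nia.
Qed.

End LinearExtension.

Definition umbrella_free (T : finType) (e : rel T) (key : T -> nat) : Prop :=
  forall x z y, key x < key z < key y -> e x y -> e x z || e z y.

Lemma umbrella_free_linear_extension (T : finType) (e r : rel T) (key : T -> nat) :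
  transitive r ->
  (forall x y, x != y -> complement_rel e x y = r x y || r y x) ->
  (forall a b, r a b -> a != b -> key a < key b) ->
  umbrella_free e key.
Proof.
move=> r_trans co_r key_mono.
have oriented a b : key a < key b -> ~~ e a b -> r a b.
  move=> lt_ab nab; have neq_ab : a != b by apply: contraTneq lt_ab => ->; rewrite ltnn.
  move: (co_r a b neq_ab); rewrite /complement_rel neq_ab nab => /esym/orP[] // rba.
  by move: lt_ab; rewrite ltnNge ltnW // key_mono // eq_sym.
move=> x z y /andP[lt_xz lt_zy] exy; apply: contraTT exy; rewrite negb_or => /andP[nxz nzy].
have neq_xy : x != y by apply: contraTneq (ltn_trans lt_xz lt_zy) => ->; rewrite ltnn.
have := co_r x y neq_xy.
have rxy := r_trans _ _ _ (oriented _ _ lt_xz nxz) (oriented _ _ lt_zy nzy).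
by rewrite rxy /complement_rel neq_xy => /andP[].
Qed.

Lemma cocomparability_umbrella_free_key (T : finType) (e : rel T) :
  cocomparability_graph e -> exists key, injective key /\ umbrella_free e key.
Proof.
move=> [r [[_ [r_anti r_trans]] co_r]].
have [key [key_inj key_mono]] := linear_extension_key r_anti r_trans.
by exists key; split; last exact: umbrella_free_linear_extension co_r key_mono.
Qed.

Lemma degree_le_max_degree (T : finType) (e : rel T) (v : T) :
  degree e v <= max_degree e.
Proof. exact: (leq_bigmax (F := degree e) v). Qed.

Section UmbrellaPathDecomposition.
Variables (T : finType) (e : rel T) (key : T -> nat).
Hypotheses (e_sym : symmetric e) (e_irr : irreflexive e).
Hypotheses (key_inj : injective key) (key_umb : umbrella_free e key).

Lemma umbrella_sub_neighbours x y v :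
  e x y -> key x <= key v <= key y -> v \in [set u | e x u] :|: [set u | e y u].
Proof.
move=> exy /andP[le_xv le_vy]; rewrite !inE.
have [-> | neq_vx] := eqVneq v x; first by rewrite e_sym exy orbT.
have [-> | neq_vy] := eqVneq v y; first by rewrite exy.
have lt_xv : key x < key v by rewrite ltn_neqAle le_xv (inj_eq key_inj) eq_sym neq_vx.
have lt_vy : key v < key y by rewrite ltn_neqAle le_vy (inj_eq key_inj) neq_vy.
have : e x v || e v y by apply: key_umb exy; rewrite lt_xv.
by case/orP=> [-> // | evy]; rewrite (e_sym y) evy orbT.
Qed.

Definition crosses (k : nat) (v : T) : bool :=
  (key v <= k) && [exists w, e v w && (k <= key w)].

Definition path_bag (k : nat) : {set T} := [set v | (key v == k) || crosses k v].

Lemma key_mem_path_bag v : v \in path_bag (key v).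
Proof. by rewrite inE eqxx. Qed.

Lemma edge_mem_path_bag u v :
  e u v -> key u < key v -> (u \in path_bag (key v)) && (v \in path_bag (key v)).
Proof.
move=> euv lt_uv; rewrite key_mem_path_bag inE andbT /crosses ltnW //.
by apply/orP; right; apply/existsP; exists v; rewrite euv leqnn.
Qed.

Lemma key_le_path_bag v k : v \in path_bag k -> key v <= k.
Proof. by rewrite inE => /orP[/eqP -> | /andP[]]. Qed.

Lemma path_bag_convex v i j l :
  v \in path_bag i -> v \in path_bag j -> i <= l <= j -> v \in path_bag l.
Proof.
move=> v_i v_j /andP[le_il le_lj]; rewrite inE.
have le_vl := leq_trans (key_le_path_bag v_i) le_il.
have [// | neq_vl] := eqVneq (key v) l; rewrite /crosses le_vl /=.
have lt_vj : key v < j by rewrite (leq_trans _ le_lj) // ltn_neqAle neq_vl.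
move: v_j; rewrite inE /crosses ltn_eqF //= => /andP[_ /existsP[w /andP[evw le_jw]]].
by apply/existsP; exists w; rewrite evw (leq_trans le_lj).
Qed.

(* The crossing vertex of smallest key, together with a neighbour beyond [k],
   spans an umbrella over the whole bag. *)
Lemma card_path_bag k : #|path_bag k| <= maxn 1 (2 * max_degree e).
Proof.
have [x0 cross_x0 | no_cross] := pickP (crosses k); last first.
  apply: leq_trans (leq_maxl _ _); apply/card_le1_eqP => u v.
  by rewrite !inE !no_cross !orbF => /eqP ku /eqP kv; apply: key_inj; rewrite ku kv.
have [x cross_x x_min] := arg_minnP key cross_x0.
case/andP: (cross_x) => le_xk /existsP[y /andP[exy le_ky]].
have sub_N : path_bag k \subset [set u | e x u] :|: [set u | e y u].
  apply/subsetP => v v_k; apply: umbrella_sub_neighbours => //.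
  rewrite (leq_trans (key_le_path_bag v_k) le_ky) andbT.
  by move: v_k; rewrite inE => /orP[/eqP -> // | /x_min].
apply: leq_trans (subset_leq_card sub_N) _; apply: leq_trans (leq_maxr _ _).
rewrite mul2n -addnn; apply: leq_trans (leq_card_setU _ _) _.
by apply: leq_add; [exact: degree_le_max_degree x | exact: degree_le_max_degree y].
Qed.

Lemma umbrella_free_treewidth_le : treewidth_le e (2 * max_degree e).-1.
Proof.
pose M := \max_(v : T) key v.
have key_lt v : key v < M.+1 by rewrite ltnS (leq_bigmax (F := key)).
exists 'I_M.+1, path_graph, (fun i : 'I_M.+1 => path_bag i); split; last first.
  by move=> i; apply: leq_trans (card_path_bag i) _; lia.
split.
- exact: path_graph_tree.
- by move=> v; exists (inord (key v)); rewrite inordK // key_mem_path_bag.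
- move=> u v euv.
  have [lt_uv | lt_vu | /key_inj eq_uv] := ltngtP (key u) (key v).
  + by exists (inord (key v)); rewrite inordK // edge_mem_path_bag.
  + by exists (inord (key u)); rewrite inordK // andbC edge_mem_path_bag // e_sym.
  + by move: euv; rewrite eq_uv e_irr.
- move=> v i j v_i v_j.
  apply: (connect_path_graph_convex (P := fun l => v \in path_bag l)) => //.
  by move=> i' j' l; apply: path_bag_convex.
Qed.

End UmbrellaPathDecomposition.

Theorem lemma13 (T : finType) (e : rel T) :
  simple_graph e -> cocomparability_graph e ->
  (exists u v : T, e u v) ->
  treewidth_le e (2 * max_degree e).-1.
Proof.
move=> [e_sym e_irr] /cocomparability_umbrella_free_key[key [key_inj key_umb]] _.
exact: umbrella_free_treewidth_le e_sym e_irr key_inj key_umb.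
Qed.
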